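(* Let $N\ge1$, $R>0$, $m>1$ with $N>m$, $p>1$, $\gamma\in(0,m-1)$, $\alpha,\beta\in\mathbb R$ with $N+\alpha-m>0$ and $\beta-\alpha+1>0$. Let $a:[0,\infty)\to(0,\infty)$ be of class $C^1$ with $c_1\le a\le c_2$ for constants $0<c_1\le c_2$, and let $g:[0,\infty)\to[0,\infty)$ be of class $C^1$ and nondecreasing. Let $v\in C^1[0,R]$ be the radial profile of a positive radial solution of $$-\mathrm{div}\Big(\frac{|x|^\alpha|\nabla u|^{m-2}\nabla u}{(a(|x|)+g(u))^\gamma}\Big)=|x|^\beta u^p \ \text{in } B_R\setminus\{0\},\qquad u=0 \text{ on }\partial B_R,$$ and let $\sigma$ be a constant with $-(N+\alpha-m)<\sigma\le m-1$. Then, writing $D(r)=a(r)+g(v(r))$, $$\Big(\sigma-m+2-\frac{N+\alpha-m+1+\sigma}{m}+\frac{N+\beta+1+\sigma-m}{p+1}\Big)\int_0^R\frac{r^{N+\alpha-m+\sigma}|v'(r)|^m}{D(r)^\gamma}dr$$ $$=\frac{m-1}{m}\frac{R^{N+\alpha-m+1+\sigma}|v'(R)|^m}{(a(R)+g(0))^\gamma}-\frac{\gamma}{m}\int_0^R\frac{r^{N+\alpha-m+1+\sigma}|v'(r)|^m a'(r)}{D(r)^{\gamma+1}}dr-\frac{\gamma}{m}\int_0^R\frac{r^{N+\alpha-m+1+\sigma}|v'(r)|^m v'(r)g'(v(r))}{D(r)^{\gamma+1}}dr$$ $$-\frac{N+\beta+1+\sigma-m}{p+1}(\sigma-m+1)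\int_0^R\frac{r^{N+\alpha+\sigma-m-1}|v'(r)|^{m-2}v'(r)v(r)}{D(r)^\gamma}dr.$$
   Context: $B_R$ is the open ball of radius $R$ centered at the origin in $\mathbb R^N$. A positive radial solution is $u(x)=v(|x|)$ with $v>0$ on $[0,R)$, $v\in C^1[0,R)\cap C[0,R]$, $r\mapsto r^{N+\alpha-1}|v'(r)|^{m-2}v'(r)(a(r)+g(v(r)))^{-\gamma}\in C^1(0,R)$, and $$-\Big(\frac{r^{N+\alpha-1}|v'(r)|^{m-2}v'(r)}{(a(r)+g(v(r)))^\gamma}\Big)'=r^{N+\beta-1}v^p(r),\ 0<r<R,\qquad v'(0)=0,\ v(R)=0.$$ *)

From Stdlib Require Import Reals Lra.
From Coquelicot Require Import Coquelicot.
Open Scope R_scope.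

(* Real power x^y for x >= 0, with the convention 0^y = 0 (used with y > 0,
   or multiplied by 0 as in |t|^(m-2) t at t = 0). *)
Definition powr (x y : R) : R := if Rle_dec x 0 then 0 else Rpower x y.

Definition cont_on (f : R -> R) (a b : R) : Prop :=
  forall x, a <= x <= b ->
    filterlim f (within (fun y => a <= y <= b) (locally x)) (locally (f x)).

Definition cont_nonneg (f : R -> R) : Prop :=
  forall x, 0 <= x ->
    filterlim f (within (fun y => 0 <= y) (locally x)) (locally (f x)).

(* int_0^R0 f = I, as an (improper at 0) Riemann integral:
   f is integrable on every [e,R0], 0<e<=R0, and int_e^R0 f -> I as e -> 0+. *)
Definition int0 (f : R -> R) (R0 I : R) : Prop :=
  (forall e, 0 < e <= R0 -> ex_RInt f e R0) /\
  filterlim (fun e => RInt f e R0) (at_right 0) (locally I).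

Definition flux (N : nat) (alpha m gamma : R) (a g v dv : R -> R) (r : R) : R :=
  powr r (INR N + alpha - 1) * (powr (Rabs (dv r)) (m - 2) * dv r)
  / powr (a r + g (v r)) gamma.

Definition pos_radial_solution (N : nat) (alpha beta m gamma p : R)
    (a g : R -> R) (R0 : R) (v dv : R -> R) : Prop :=
  (forall r, 0 <= r < R0 -> 0 < v r) /\
  cont_on v 0 R0 /\
  (forall r, 0 < r < R0 -> is_derive v r (dv r)) /\
  cont_on dv 0 R0 /\
  (forall r, 0 < r < R0 ->
     is_derive (flux N alpha m gamma a g v dv) r
       (- (powr r (INR N + beta - 1) * powr (v r) p))) /\
  dv 0 = 0 /\ v R0 = 0.

(* Pohozaev-type argument.  The flux r^(N+alpha-1) |v'|^(m-2) v' / D^gamma vanishes at 0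
   and is strictly decreasing, hence negative; so v' < 0 on (0,R), and inverting the flux
   shows that v' is differentiable there.  Then
     Q(r) = (m-1)/m r^(N+alpha-m+1+sigma) |v'|^m / D^gamma
            + r^(N+beta+1+sigma-m) v^(p+1) / (p+1)
            + (N+beta+1+sigma-m)/(p+1) r^(sigma-m+1) v flux
   has as derivative the linear combination of the four integrands of the identity, so
   integrating over [e,R] and letting e -> 0 gives the result, Q(R) being the boundary
   term.  Since flux + K r^(N+beta) is nondecreasing and tends to 0 at 0, |flux| is at most
   K r^(N+beta); this makes the last integrand O(r^(N+beta+sigma-m)), integrable at 0, and
   forces Q(e) -> 0. *)

From Stdlib Require Import Reals Lra.
From Coquelicot Require Import Coquelicot.
Open Scope R_scope.

(** * Limits along a filter *)

Section FilterLimits.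

Context {T : Type} {F : (T -> Prop) -> Prop} {FF : Filter F}.

Lemma filterlim_Rplus (f g : T -> R) (a b : R) :
  filterlim f F (locally a) -> filterlim g F (locally b) ->
  filterlim (fun x => f x + g x) F (locally (a + b)).
Proof. intros Hf Hg; exact (filterlim_comp_2 f g Rplus Hf Hg (filterlim_plus a b)). Qed.

Lemma filterlim_Rmult (f g : T -> R) (a b : R) :
  filterlim f F (locally a) -> filterlim g F (locally b) ->
  filterlim (fun x => f x * g x) F (locally (a * b)).
Proof. intros Hf Hg; exact (filterlim_comp_2 f g Rmult Hf Hg (@filterlim_mult R_AbsRing a b)). Qed.

Lemma filterlim_Rmult_l (c : R) (f : T -> R) (a : R) :
  filterlim f F (locally a) -> filterlim (fun x => c * f x) F (locally (c * a)).
Proof. apply filterlim_Rmult, filterlim_const. Qed.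

Lemma filterlim_continuous_comp (h : R -> R) (f : T -> R) (a : R) :
  continuous h a -> filterlim f F (locally a) ->
  filterlim (fun x => h (f x)) F (locally (h a)).
Proof. intros Hh Hf; eapply filterlim_comp; eassumption. Qed.

Lemma filterlim_Ropp (f : T -> R) (a : R) :
  filterlim f F (locally a) -> filterlim (fun x => - f x) F (locally (- a)).
Proof.
  apply (filterlim_continuous_comp Ropp f a).
  apply (continuous_opp (fun x : R => x)), continuous_id.
Qed.

Lemma filterlim_Rdiv (f g : T -> R) (a b : R) : b <> 0 ->
  filterlim f F (locally a) -> filterlim g F (locally b) ->
  filterlim (fun x => f x / g x) F (locally (a / b)).
Proof.
  intros Hb Hf Hg; apply filterlim_Rmult; [exact Hf|].
  exact (filterlim_continuous_comp Rinv g b (continuous_Rinv b Hb) Hg).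
Qed.

Lemma filterlim_of_abs_sub_le (f g : T -> R) (l : R) :
  F (fun x => Rabs (f x - l) <= g x) -> filterlim g F (locally 0) ->
  filterlim f F (locally l).
Proof.
  intros Hfg Hg; apply filterlim_locally; intros eps.
  apply (filter_imp (fun x => Rabs (f x - l) <= g x /\ ball 0 eps (g x))).
  - intros x [H1 H2]; change (Rabs (f x - l) < eps).
    change (Rabs (g x - 0) < eps) in H2; rewrite Rminus_0_r in H2.
    apply Rabs_def2 in H2; lra.
  - apply filter_and; [exact Hfg|exact (proj1 (filterlim_locally g 0) Hg eps)].
Qed.

End FilterLimits.

Lemma le_of_filterlim_at_right (f : R -> R) (x l c : R) :
  at_right x (fun y => f y <= c) -> filterlim f (at_right x) (locally l) -> l <= c.
Proof.
  intros Hle Hf.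
  exact (filterlim_le (F := at_right x) f (fun _ => c) l c Hle Hf (filterlim_const c)).
Qed.

(** * Real powers *)

Lemma powr_Rpower (x c : R) : 0 < x -> powr x c = Rpower x c.
Proof. intros Hx; unfold powr; destruct (Rle_dec x 0); [lra|reflexivity]. Qed.

Lemma powr_nonpos (x c : R) : x <= 0 -> powr x c = 0.
Proof. intros Hx; unfold powr; destruct (Rle_dec x 0); [reflexivity|lra]. Qed.

Lemma powr_ge0 (x c : R) : 0 <= powr x c.
Proof. unfold powr; destruct (Rle_dec x 0); [lra|left; apply exp_pos]. Qed.

Lemma powr_le (x y c : R) : 0 <= x <= y -> 0 <= c -> powr x c <= powr y c.
Proof.
  intros Hxy Hc; destruct (Req_dec x 0) as [->|Hx].
  - rewrite powr_nonpos by lra; apply powr_ge0.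
  - rewrite !powr_Rpower by lra; apply Rle_Rpower_l; lra.
Qed.

Lemma powr_abs_mul_abs (m y : R) :
  powr (Rabs y) (m - 2) * Rabs y = powr (Rabs y) (m - 1).
Proof.
  destruct (Req_dec y 0) as [->|Hy].
  - rewrite Rabs_R0, !powr_nonpos by lra; ring.
  - assert (0 < Rabs y) by (apply Rabs_pos_lt; exact Hy).
    rewrite !powr_Rpower by lra.
    replace (m - 1) with ((m - 2) + 1) by ring; rewrite Rpower_plus, Rpower_1; lra.
Qed.

Lemma Rpower_add_exp (x a b c : R) : 0 < x -> a = b + c -> Rpower x a = Rpower x b * Rpower x c.
Proof. intros Hx ->; apply Rpower_plus. Qed.

Lemma Rpower_succ_exp (x a b : R) : 0 < x -> a = b + 1 -> Rpower x a = Rpower x b * x.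
Proof. intros Hx ->; rewrite Rpower_plus, Rpower_1; lra. Qed.

Lemma Rpower_pred_exp (x a b : R) : 0 < x -> a = b - 1 -> Rpower x a = Rpower x b / x.
Proof. intros Hx ->; unfold Rminus; rewrite Rpower_plus, Rpower_Ropp, Rpower_1; lra. Qed.

Lemma is_derive_Rpower (x c : R) : 0 < x ->
  is_derive (fun t => Rpower t c) x (c * Rpower x c / x).
Proof.
  intros Hx; apply is_derive_Reals.
  unfold Rdiv; rewrite Rmult_assoc; fold (Rpower x c / x).
  rewrite <- (Rpower_pred_exp x (c - 1) c) by (lra || ring).
  now apply derivable_pt_lim_power.
Qed.

Lemma is_derive_Rplus (f g : R -> R) (x df dg : R) :
  is_derive f x df -> is_derive g x dg -> is_derive (fun t => f t + g t) x (df + dg).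
Proof. exact (is_derive_plus f g x df dg). Qed.

Lemma is_derive_Rmult (f g : R -> R) (x df dg : R) :
  is_derive f x df -> is_derive g x dg ->
  is_derive (fun t => f t * g t) x (df * g x + f x * dg).
Proof. intros Hf Hg; apply (is_derive_mult f g x df dg Hf Hg), Rmult_comm. Qed.

Lemma is_derive_Ropp (f : R -> R) (x df : R) :
  is_derive f x df -> is_derive (fun t => - f t) x (- df).
Proof. exact (is_derive_opp f x df). Qed.

Lemma is_derive_Rconst (c x : R) : is_derive (fun _ : R => c) x 0.
Proof. exact (is_derive_const (K := R_AbsRing) c x). Qed.

Lemma is_derive_Rpower_comp (u : R -> R) (x du c : R) : 0 < u x -> is_derive u x du ->
  is_derive (fun t => Rpower (u t) c) x (c * Rpower (u x) c / u x * du).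
Proof.
  intros Hu Hd.
  assert (H := is_derive_comp (fun t => Rpower t c) u x _ _ (is_derive_Rpower (u x) c Hu) Hd).
  rewrite Rmult_comm; exact H.
Qed.

Lemma continuous_Rpower (x c : R) : 0 < x -> continuous (fun t => Rpower t c) x.
Proof.
  intros Hx; apply (ex_derive_continuous (K := R_AbsRing) (V := R_NormedModule)).
  eexists; apply is_derive_Rpower, Hx.
Qed.

Lemma continuous_powr_pos (x c : R) : 0 < x -> continuous (fun y => powr y c) x.
Proof.
  intros Hx; unfold continuous; rewrite (powr_Rpower x c Hx).
  apply (filterlim_ext_loc (fun y => Rpower y c)); [|exact (continuous_Rpower x c Hx)].
  apply (filter_imp (fun t => 0 < t)); [|exact (open_gt 0 x Hx)].
  intros y Hy; symmetry; apply powr_Rpower, Hy.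
Qed.

Lemma continuous_powr (x c : R) : 0 < c -> continuous (fun y => powr y c) x.
Proof.
  intros Hc; destruct (Rtotal_order x 0) as [Hx|[->|Hx]].
  - unfold continuous; rewrite (powr_nonpos x c) by lra.
    apply (filterlim_ext_loc (fun _ => 0)); [|apply filterlim_const].
    apply (filter_imp (fun t => t < 0)); [|exact (open_lt 0 x Hx)].
    intros y Hy; symmetry; apply powr_nonpos; lra.
  - unfold continuous; rewrite (powr_nonpos 0 c) by lra; apply filterlim_locally; intros eps.
    assert (Hd : 0 < Rpower eps (/ c)) by apply exp_pos.
    exists (mkposreal _ Hd); intros y Hy; change (Rabs (y - 0) < Rpower eps (/ c)) in Hy.
    change (Rabs (powr y c - 0) < eps); rewrite Rminus_0_r in *.
    rewrite Rabs_pos_eq by apply powr_ge0.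
    destruct (Rle_dec y 0) as [Hy0|Hy0].
    + rewrite powr_nonpos by lra; apply cond_pos.
    + rewrite powr_Rpower by lra; rewrite Rabs_pos_eq in Hy by lra.
      replace (pos eps) with (Rpower (Rpower eps (/ c)) c).
      * apply Rlt_Rpower_l; lra.
      * rewrite Rpower_mult, Rinv_l, Rpower_1 by (apply cond_pos || lra); reflexivity.
  - exact (continuous_powr_pos x c Hx).
Qed.

Lemma continuous_signed_powr (m y : R) : 1 < m ->
  continuous (fun t => powr (Rabs t) (m - 2) * t) y.
Proof.
  intros Hm; destruct (Req_dec y 0) as [->|Hy].
  - unfold continuous; rewrite Rabs_R0, powr_nonpos, Rmult_0_r by lra.
    apply (filterlim_of_abs_sub_le _ (fun t => powr (Rabs t) (m - 1))).
    + apply filter_forall; intros t.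
      rewrite Rminus_0_r, Rabs_mult, (Rabs_pos_eq (powr _ _)) by apply powr_ge0.
      rewrite powr_abs_mul_abs; lra.
    + assert (Hc := continuous_comp Rabs (fun t => powr t (m - 1)) 0
        (continuous_Rabs 0) (continuous_powr _ (m - 1) ltac:(lra))).
      unfold continuous in Hc; rewrite Rabs_R0, powr_nonpos in Hc by lra; exact Hc.
  - apply (filterlim_Rmult (fun t => powr (Rabs t) (m - 2)) (fun t => t)); [|apply continuous_id].
    apply (continuous_comp Rabs (fun t => powr t (m - 2))); [apply continuous_Rabs|].
    apply continuous_powr_pos, Rabs_pos_lt, Hy.
Qed.

(** * Continuity on a closed interval *)

Section ContOn.

Variables a b : R.

Lemma cont_on_continuous (f : R -> R) :
  (forall x, a <= x <= b -> continuous f x) -> cont_on f a b.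
Proof.
  intros Hf x Hx; eapply filterlim_filter_le_1; [apply filter_le_within|exact (Hf x Hx)].
Qed.

Lemma cont_on_const (c : R) : cont_on (fun _ => c) a b.
Proof. intros x _; apply filterlim_const. Qed.

Lemma cont_on_id : cont_on (fun x => x) a b.
Proof. apply cont_on_continuous; intros x _; apply continuous_id. Qed.

Lemma cont_on_powr (c : R) : 0 < c -> cont_on (fun x => powr x c) a b.
Proof. intros Hc; apply cont_on_continuous; intros x _; apply continuous_powr, Hc. Qed.

Lemma cont_on_powr_pos (c : R) : 0 < a -> cont_on (fun x => powr x c) a b.
Proof. intros Ha; apply cont_on_continuous; intros x Hx; apply continuous_powr_pos; lra. Qed.

Lemma cont_on_plus (f g : R -> R) :
  cont_on f a b -> cont_on g a b -> cont_on (fun x => f x + g x) a b.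
Proof. intros Hf Hg x Hx; exact (filterlim_Rplus f g _ _ (Hf x Hx) (Hg x Hx)). Qed.

Lemma cont_on_mult (f g : R -> R) :
  cont_on f a b -> cont_on g a b -> cont_on (fun x => f x * g x) a b.
Proof. intros Hf Hg x Hx; exact (filterlim_Rmult f g _ _ (Hf x Hx) (Hg x Hx)). Qed.

Lemma cont_on_div (f g : R -> R) : cont_on f a b -> cont_on g a b ->
  (forall x, a <= x <= b -> g x <> 0) -> cont_on (fun x => f x / g x) a b.
Proof. intros Hf Hg Hg0 x Hx; exact (filterlim_Rdiv f g _ _ (Hg0 x Hx) (Hf x Hx) (Hg x Hx)). Qed.

Lemma cont_on_comp (h f : R -> R) : (forall x, a <= x <= b -> continuous h (f x)) ->
  cont_on f a b -> cont_on (fun x => h (f x)) a b.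
Proof. intros Hh Hf x Hx; exact (filterlim_continuous_comp h f _ (Hh x Hx) (Hf x Hx)). Qed.

Lemma cont_on_comp_nonneg (h f : R -> R) : cont_nonneg h -> cont_on f a b ->
  (forall x, a <= x <= b -> 0 <= f x) -> cont_on (fun x => h (f x)) a b.
Proof.
  intros Hh Hf Hf0 x Hx P HP.
  specialize (Hh (f x) (Hf0 x Hx) P HP); specialize (Hf x Hx _ Hh).
  unfold filtermap, within in *.
  apply (filter_imp (fun y => a <= y <= b -> 0 <= f y -> P (h (f y)))).
  - intros y Hy Hab; exact (Hy Hab (Hf0 y Hab)).
  - exact Hf.
Qed.

Lemma locally_open_interval (x : R) : a < x < b -> locally x (fun y => a < y < b).
Proof.
  intros Hx; apply (open_and (fun y => a < y) (fun y => y < b));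
    [apply open_gt|apply open_lt|exact Hx].
Qed.

Lemma is_derive_open_interval (f g : R -> R) (x l l' : R) : a < x < b ->
  (forall t, a < t < b -> g t = f t) -> is_derive g x l -> l = l' -> is_derive f x l'.
Proof.
  intros Hx Hfg Hg <-; apply (is_derive_ext_loc g); [|exact Hg].
  apply (filter_imp (fun t => a < t < b)); [exact Hfg|apply locally_open_interval, Hx].
Qed.

Lemma cont_on_interior (f : R -> R) (x : R) : a < x < b -> cont_on f a b -> continuous f x.
Proof.
  intros Hx Hf P HP; specialize (Hf x ltac:(lra) P HP).
  change (locally x (fun y => P (f y))).
  apply (filter_imp (fun y => (a <= y <= b -> P (f y)) /\ (a < y /\ y < b))).
  - intros y [Hy Hab]; apply Hy; lra.
  - apply filter_and; [exact Hf|apply locally_open_interval, Hx].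
Qed.

Lemma cont_on_at_left (f : R -> R) : a < b -> cont_on f a b ->
  filterlim f (at_left b) (locally (f b)).
Proof.
  intros Hab Hf P HP; destruct (Hf b ltac:(lra) P HP) as [eps He].
  assert (Hd : 0 < Rmin eps (b - a)) by (apply Rmin_glb_lt; [apply cond_pos|lra]).
  exists (mkposreal _ Hd); intros y Hy Hyb; change (Rabs (y - b) < Rmin eps (b - a)) in Hy.
  apply He.
  - change (Rabs (y - b) < eps); eapply Rlt_le_trans; [exact Hy|apply Rmin_l].
  - assert (Rabs (y - b) < b - a) by (eapply Rlt_le_trans; [exact Hy|apply Rmin_r]).
    apply Rabs_def2 in H; lra.
Qed.

Lemma cont_on_at_right (f : R -> R) : a < b -> cont_on f a b ->
  filterlim f (at_right a) (locally (f a)).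
Proof.
  intros Hab Hf P HP; destruct (Hf a ltac:(lra) P HP) as [eps He].
  assert (Hd : 0 < Rmin eps (b - a)) by (apply Rmin_glb_lt; [apply cond_pos|lra]).
  exists (mkposreal _ Hd); intros y Hy Hya; change (Rabs (y - a) < Rmin eps (b - a)) in Hy.
  apply He.
  - change (Rabs (y - a) < eps); eapply Rlt_le_trans; [exact Hy|apply Rmin_l].
  - assert (Rabs (y - a) < b - a) by (eapply Rlt_le_trans; [exact Hy|apply Rmin_r]).
    apply Rabs_def2 in H; lra.
Qed.

(* Composing with [clamp] turns continuity within [a,b] into continuity everywhere,
   which is what Coquelicot's integrability and boundedness theorems require. *)
Definition clamp (y : R) : R := Rmax a (Rmin b y).

Lemma clamp_id (y : R) : a <= y <= b -> clamp y = y.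
Proof. intros H; unfold clamp, Rmax, Rmin; repeat destruct Rle_dec; lra. Qed.

Lemma continuous_comp_clamp (f : R -> R) (x : R) : a <= b -> cont_on f a b ->
  continuous (fun y => f (clamp y)) x.
Proof.
  intros Hab Hf.
  assert (Hin : forall y, a <= clamp y <= b)
    by (intros y; unfold clamp, Rmax, Rmin; repeat destruct Rle_dec; lra).
  assert (Hlip : forall y, Rabs (clamp y - clamp x) <= Rabs (y - x)).
  { intros y; unfold clamp, Rmax, Rmin; repeat destruct Rle_dec;
      unfold Rabs; repeat destruct Rcase_abs; lra. }
  intros P HP; destruct (Hf (clamp x) (Hin x) P HP) as [eps He].
  exists eps; intros y Hy; apply He; [|apply Hin].
  change (Rabs (clamp y - clamp x) < eps); eapply Rle_lt_trans; [apply Hlip|exact Hy].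
Qed.

Lemma cont_on_ex_RInt (f : R -> R) : a <= b -> cont_on f a b -> ex_RInt f a b.
Proof.
  intros Hab Hf; apply (ex_RInt_ext (fun y => f (clamp y))).
  - intros x Hx; rewrite Rmin_left, Rmax_right in Hx by lra; rewrite clamp_id; lra.
  - apply (ex_RInt_continuous (V := R_CompleteNormedModule)); intros z _.
    apply continuous_comp_clamp; assumption.
Qed.

Lemma cont_on_bounded (f : R -> R) : a <= b -> cont_on f a b ->
  exists M, forall x, a <= x <= b -> Rabs (f x) <= M.
Proof.
  intros Hab Hf.
  destruct (bounded_continuity (fun y => f (clamp y)) a b) as [M HM].
  { intros x _; apply continuous_comp_clamp; assumption. }
  exists M; intros x Hx; specialize (HM x Hx); rewrite clamp_id in HM by exact Hx.
  left; exact HM.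
Qed.

End ContOn.

Lemma cont_on_sub (f : R -> R) (a b a' b' : R) : a <= a' -> b' <= b ->
  cont_on f a b -> cont_on f a' b'.
Proof.
  intros Ha Hb Hf x Hx P HP; specialize (Hf x ltac:(lra) P HP).
  unfold filtermap, within in *; eapply filter_imp; [|exact Hf].
  intros y Hy Hy'; apply Hy; lra.
Qed.

(** * Integrals *)

Lemma filterlim_Rpower_at_right_0 (c : R) : 0 < c ->
  filterlim (fun x => Rpower x c) (at_right 0) (locally 0).
Proof.
  intros Hc; assert (H0 := continuous_powr 0 c Hc); unfold continuous in H0.
  rewrite powr_nonpos in H0 by lra.
  apply (filterlim_ext_loc (fun x => powr x c)).
  - exists (mkposreal 1 Rlt_0_1); intros x _ Hx; apply powr_Rpower, Hx.
  - eapply filterlim_filter_le_1; [apply filter_le_within|exact H0].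
Qed.

Lemma filterlim_sub_mul_at_right (a M : R) :
  filterlim (fun e => (e - a) * M) (at_right a) (locally 0).
Proof.
  replace 0 with ((a - a) * M) by ring.
  eapply filterlim_filter_le_1; [apply filter_le_within|].
  apply (ex_derive_continuous (K := R_AbsRing) (V := R_NormedModule) (fun e => (e - a) * M)).
  auto_derive; auto.
Qed.

Lemma filterlim_sub_mul_at_left (b M : R) :
  filterlim (fun u => (b - u) * M) (at_left b) (locally 0).
Proof.
  replace 0 with ((b - b) * M) by ring.
  eapply filterlim_filter_le_1; [apply filter_le_within|].
  apply (ex_derive_continuous (K := R_AbsRing) (V := R_NormedModule) (fun u => (b - u) * M)).
  auto_derive; auto.
Qed.

Lemma RInt_Chasles_R (f : R -> R) (a b c : R) : ex_RInt f a b -> ex_RInt f b c ->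
  RInt f a c = RInt f a b + RInt f b c.
Proof. intros Hab Hbc; symmetry; exact (RInt_Chasles f a b c Hab Hbc). Qed.

Lemma filterlim_RInt_lower (f : R -> R) (a b : R) : a < b -> cont_on f a b ->
  filterlim (fun e => RInt f e b) (at_right a) (locally (RInt f a b)).
Proof.
  intros Hab Hf; destruct (cont_on_bounded a b f ltac:(lra) Hf) as [M HM].
  apply (filterlim_of_abs_sub_le _ (fun e => (e - a) * M)); [|apply filterlim_sub_mul_at_right].
  exists (mkposreal _ (proj2 (Rlt_0_minus _ _) Hab)); intros e He Hae.
  change (Rabs (e - a) < b - a) in He; apply Rabs_def2 in He.
  rewrite (RInt_Chasles_R f a e b)
    by (apply cont_on_ex_RInt; [lra|apply (cont_on_sub f a b); [lra|lra|exact Hf]]).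
  replace (RInt f e b - (RInt f a e + RInt f e b)) with (- RInt f a e) by ring.
  rewrite Rabs_Ropp; apply abs_RInt_le_const; [lra| |intros t Ht; apply HM; lra].
  apply cont_on_ex_RInt; [lra|apply (cont_on_sub f a b); [lra|lra|exact Hf]].
Qed.

Lemma filterlim_RInt_upper (f : R -> R) (a b : R) : a < b -> cont_on f a b ->
  filterlim (fun u => RInt f a u) (at_left b) (locally (RInt f a b)).
Proof.
  intros Hab Hf; destruct (cont_on_bounded a b f ltac:(lra) Hf) as [M HM].
  apply (filterlim_of_abs_sub_le _ (fun u => (b - u) * M)); [|apply filterlim_sub_mul_at_left].
  exists (mkposreal _ (proj2 (Rlt_0_minus _ _) Hab)); intros u Hu Hub.
  change (Rabs (u - b) < b - a) in Hu; apply Rabs_def2 in Hu.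
  rewrite (RInt_Chasles_R f a u b)
    by (apply cont_on_ex_RInt; [lra|apply (cont_on_sub f a b); [lra|lra|exact Hf]]).
  replace (RInt f a u - (RInt f a u + RInt f u b)) with (- RInt f u b) by ring.
  rewrite Rabs_Ropp; apply abs_RInt_le_const; [lra| |intros t Ht; apply HM; lra].
  apply cont_on_ex_RInt; [lra|apply (cont_on_sub f a b); [lra|lra|exact Hf]].
Qed.

Lemma int0_RInt (f : R -> R) (R0 : R) : 0 < R0 -> cont_on f 0 R0 -> int0 f R0 (RInt f 0 R0).
Proof.
  intros HR Hf; split; [|exact (filterlim_RInt_lower f 0 R0 HR Hf)].
  intros e He; apply cont_on_ex_RInt; [lra|apply (cont_on_sub f 0 R0); [lra|lra|exact Hf]].
Qed.

Lemma RInt_eq_of_derive_at_left (G h : R -> R) (a b Gb : R) : a < b ->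
  (forall x, a < x < b -> is_derive G x (h x)) -> cont_on h a b ->
  filterlim G (at_left b) (locally Gb) -> forall e, a < e < b -> RInt h e b = Gb - G e.
Proof.
  intros Hab HG Hh HGb e He.
  apply (filterlim_locally_unique (F := at_left b) (fun u => RInt h e u)).
  - apply filterlim_RInt_upper; [lra|apply (cont_on_sub h a b); [lra|lra|exact Hh]].
  - apply (filterlim_ext_loc (fun u => G u + - G e)).
    + exists (mkposreal _ (proj2 (Rlt_0_minus _ _) (proj2 He))); intros u Hu Hub.
      change (Rabs (u - b) < b - e) in Hu; apply Rabs_def2 in Hu.
      symmetry; apply is_RInt_unique.
      apply (is_RInt_derive (V := R_CompleteNormedModule));
        rewrite Rmin_left, Rmax_right by lra; intros x Hx.
      * apply HG; lra.
      * apply (cont_on_interior a b); [lra|exact Hh].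
    + apply filterlim_Rplus; [exact HGb|apply filterlim_const].
Qed.

Lemma abs_RInt_le_Rpower (f : R -> R) (C c u w : R) : 0 < u <= w -> -1 < c ->
  ex_RInt f u w -> (forall r, u <= r <= w -> Rabs (f r) <= C * Rpower r c) ->
  Rabs (RInt f u w) <= C / (c + 1) * Rpower w (c + 1).
Proof.
  intros Huw Hc Hf Hb.
  assert (HC : 0 <= C).
  { specialize (Hb u ltac:(lra)); pose proof (Rabs_pos (f u)); pose proof (exp_pos (c * ln u)).
    unfold Rpower in Hb; nra. }
  set (P := fun r => C / (c + 1) * Rpower r (c + 1)).
  assert (HP : is_RInt (fun r => C * Rpower r c) u w (P w - P u)).
  { apply (is_RInt_derive (V := R_CompleteNormedModule) P);
      rewrite Rmin_left, Rmax_right by lra; intros x Hx.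
    - replace (C * Rpower x c) with (C / (c + 1) * ((c + 1) * Rpower x (c + 1) / x)).
      + apply is_derive_scal, is_derive_Rpower; lra.
      + rewrite (Rpower_succ_exp x (c + 1) c) by (lra || ring); field; lra.
    - apply (filterlim_Rmult_l C (fun r => Rpower r c)), continuous_Rpower; lra. }
  assert (HPu : 0 <= P u)
    by (apply Rmult_le_pos; [apply Rdiv_le_0_compat; lra|left; apply exp_pos]).
  apply Rle_trans with (P w - P u); [|unfold P in *; lra].
  rewrite <- (is_RInt_unique _ _ _ _ HP).
  eapply Rle_trans; [apply abs_RInt_le; [lra|exact Hf]|].
  apply RInt_le; [lra|apply (ex_RInt_norm f u w Hf)|exists (P w - P u); exact HP|].
  intros x Hx; apply Hb; lra.
Qed.

Lemma int0_of_Rpower_bound (f : R -> R) (R0 C c : R) : 0 < R0 -> -1 < c ->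
  (forall e, 0 < e <= R0 -> ex_RInt f e R0) ->
  (forall r, 0 < r < R0 -> Rabs (f r) <= C * Rpower r c) -> exists I, int0 f R0 I.
Proof.
  intros HR Hc Hex Hb.
  cut (exists I, filterlim (fun e => RInt f e R0) (at_right 0) (locally I)).
  { intros [I HI]; exists I; split; assumption. }
  apply (filterlim_locally_cauchy (F := at_right 0)); intros eps.
  set (P := fun w => 0 < w < R0 /\ C / (c + 1) * Rpower w (c + 1) < eps).
  assert (Hcauchy : forall u w, u <= w -> P u -> P w -> Rabs (RInt f u R0 - RInt f w R0) < eps).
  { intros u w Huw [Hu _] [Hw Hsmall].
    assert (Huw' : ex_RInt f u w) by (apply (ex_RInt_Chasles_1 f u w R0); [lra|apply Hex; lra]).
    rewrite (RInt_Chasles_R f u w R0 Huw' (Hex w ltac:(lra))).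
    unfold Rminus; rewrite Rplus_assoc, Rplus_opp_r, Rplus_0_r.
    eapply Rle_lt_trans; [|exact Hsmall].
    apply abs_RInt_le_Rpower; [lra|lra|exact Huw'|intros r Hr; apply Hb; lra]. }
  exists P; split.
  - assert (Hsmall := filterlim_Rmult_l (F := at_right 0) (C / (c + 1)) _ _
      (filterlim_Rpower_at_right_0 (c + 1) ltac:(lra))).
    rewrite Rmult_0_r in Hsmall.
    apply (filter_and (F := at_right 0)).
    + exists (mkposreal R0 HR); intros w Hw Hw0; change (Rabs (w - 0) < R0) in Hw.
      rewrite Rminus_0_r in Hw; apply Rabs_def2 in Hw; lra.
    + apply (filter_imp (fun w => Rabs (C / (c + 1) * Rpower w (c + 1) - 0) < eps)).
      * intros w Hw; rewrite Rminus_0_r in Hw; apply Rabs_def2 in Hw; lra.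
      * exact (proj1 (filterlim_locally (F := at_right 0) _ 0) Hsmall eps).
  - intros u w Hu Hw; change (Rabs (RInt f w R0 - RInt f u R0) < eps).
    destruct (Rle_dec u w) as [Huw|Hwu].
    + rewrite Rabs_minus_sym; exact (Hcauchy u w Huw Hu Hw).
    + apply (Hcauchy w u); [lra|exact Hw|exact Hu].
Qed.

Lemma RInt_lincomb4 (f1 f2 f3 f4 : R -> R) (k1 k2 k3 k4 a b : R) :
  ex_RInt f1 a b -> ex_RInt f2 a b -> ex_RInt f3 a b -> ex_RInt f4 a b ->
  RInt (fun x => k1 * f1 x + k2 * f2 x + k3 * f3 x + k4 * f4 x) a b =
  k1 * RInt f1 a b + k2 * RInt f2 a b + k3 * RInt f3 a b + k4 * RInt f4 a b.
Proof.
  intros E1 E2 E3 E4; apply is_RInt_unique.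
  apply (is_RInt_plus (V := R_NormedModule) (fun x => k1 * f1 x + k2 * f2 x + k3 * f3 x)).
  apply (is_RInt_plus (V := R_NormedModule) (fun x => k1 * f1 x + k2 * f2 x)).
  apply (is_RInt_plus (V := R_NormedModule) (fun x => k1 * f1 x)).
  all: apply (is_RInt_scal (V := R_NormedModule)), (RInt_correct (V := R_CompleteNormedModule)).
  all: assumption.
Qed.

(** * Sign from the derivative *)

Lemma MVT_closed (F dF : R -> R) (t r : R) : t < r ->
  (forall x, t <= x <= r -> is_derive F x (dF x)) ->
  exists c, t <= c <= r /\ F r - F t = dF c * (r - t).
Proof.
  intros Htr Hd; destruct (MVT_gen F t r dF) as [c [Hc E]];
    rewrite ?Rmin_left, ?Rmax_right in * by lra.
  - intros x Hx; apply Hd; lra.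
  - intros x Hx; apply continuity_pt_filterlim.
    apply (ex_derive_continuous (K := R_AbsRing) (V := R_NormedModule)).
    eexists; apply Hd; exact Hx.
  - exists c; split; assumption.
Qed.

Lemma nonneg_of_derive_nonneg_at_right_0 (F dF : R -> R) (R0 : R) :
  (forall r, 0 < r < R0 -> is_derive F r (dF r)) -> (forall r, 0 < r < R0 -> 0 <= dF r) ->
  filterlim F (at_right 0) (locally 0) -> forall r, 0 < r < R0 -> 0 <= F r.
Proof.
  intros Hd Hpos HF r Hr; apply (le_of_filterlim_at_right F 0 0 (F r)); [|exact HF].
  exists (mkposreal r (proj1 Hr)); intros t Ht Ht0.
  change (Rabs (t - 0) < r) in Ht; rewrite Rminus_0_r in Ht; apply Rabs_def2 in Ht.
  destruct (MVT_closed F dF t r) as [c [Hc E]]; [lra|intros x Hx; apply Hd; lra|].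
  specialize (Hpos c ltac:(lra)); nra.
Qed.

Lemma neg_of_derive_neg_at_right_0 (F dF : R -> R) (R0 : R) :
  (forall r, 0 < r < R0 -> is_derive F r (dF r)) -> (forall r, 0 < r < R0 -> dF r < 0) ->
  filterlim F (at_right 0) (locally 0) -> forall r, 0 < r < R0 -> F r < 0.
Proof.
  intros Hd Hneg HF r Hr.
  assert (Hhalf : 0 <= - F (r / 2)).
  { apply (nonneg_of_derive_nonneg_at_right_0 (fun x => - F x) (fun x => - dF x) R0); [| | |lra].
    - intros x Hx; apply is_derive_Ropp, Hd, Hx.
    - intros x Hx; specialize (Hneg x Hx); lra.
    - replace (locally 0) with (locally (- 0)) by (rewrite Ropp_0; reflexivity).
      apply filterlim_Ropp, HF. }
  destruct (MVT_closed F dF (r / 2) r) as [c [Hc E]]; [lra|intros x Hx; apply Hd; lra|].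
  specialize (Hneg c ltac:(lra)); nra.
Qed.

(** * The radial solution *)

Section RadialSolution.

Variables (N : nat) (R0 m p gamma alpha beta c1 sigma : R) (a da g dg v dv : R -> R).

Local Notation Na := (INR N + alpha).
Local Notation Nb := (INR N + beta).
Local Notation fl := (flux N alpha m gamma a g v dv).

Hypotheses (HR0 : 0 < R0) (Hm : 1 < m) (Hp : 0 <= p)
  (HNa : 0 < Na - m) (Hbeta : 0 < beta - alpha + 1) (Hsigma : - (Na - m) < sigma)
  (Hc1 : 0 < c1) (Ha_ge : forall r, 0 <= r -> c1 <= a r)
  (Ha_der : forall r, 0 < r -> is_derive a r (da r))
  (Ha_cont : cont_nonneg a) (Hda_cont : cont_nonneg da)
  (Hg_ge0 : forall s, 0 <= s -> 0 <= g s)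
  (Hg_der : forall s, 0 < s -> is_derive g s (dg s))
  (Hg_cont : cont_nonneg g) (Hdg_cont : cont_nonneg dg)
  (Hv_pos : forall r, 0 <= r < R0 -> 0 < v r) (Hv_cont : cont_on v 0 R0)
  (Hv_der : forall r, 0 < r < R0 -> is_derive v r (dv r)) (Hdv_cont : cont_on dv 0 R0)
  (Hflux_der : forall r, 0 < r < R0 -> is_derive fl r (- (powr r (Nb - 1) * powr (v r) p)))
  (Hv_R0 : v R0 = 0).

Definition Dcoef (r : R) : R := a r + g (v r).

Lemma v_ge0 (r : R) : 0 <= r <= R0 -> 0 <= v r.
Proof.
  intros Hr; destruct (Req_dec r R0) as [->|Hne]; [lra|].
  left; apply Hv_pos; lra.
Qed.

Lemma Dcoef_ge (r : R) : 0 <= r <= R0 -> c1 <= Dcoef r.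
Proof.
  intros Hr; pose proof (Ha_ge r (proj1 Hr)); pose proof (Hg_ge0 (v r) (v_ge0 r Hr)).
  unfold Dcoef; lra.
Qed.

Lemma powr_Dcoef_neq0 (c r : R) : 0 <= r <= R0 -> powr (Dcoef r) c <> 0.
Proof.
  intros Hr; pose proof (Dcoef_ge r Hr); rewrite powr_Rpower by lra.
  apply Rgt_not_eq, exp_pos.
Qed.

Lemma Dcoef_cont : cont_on Dcoef 0 R0.
Proof.
  apply cont_on_plus.
  - apply (cont_on_comp_nonneg 0 R0 a (fun r => r)); [exact Ha_cont|apply cont_on_id|].
    intros r Hr; apply Hr.
  - apply cont_on_comp_nonneg; [exact Hg_cont|exact Hv_cont|exact v_ge0].
Qed.

Lemma powr_Dcoef_cont (c : R) : cont_on (fun r => powr (Dcoef r) c) 0 R0.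
Proof.
  apply (cont_on_comp 0 R0 (fun y => powr y c)); [|exact Dcoef_cont].
  intros r Hr; apply continuous_powr_pos; pose proof (Dcoef_ge r Hr); lra.
Qed.

Lemma Dcoef_derive (r : R) : 0 < r < R0 -> is_derive Dcoef r (da r + dg (v r) * dv r).
Proof.
  intros Hr; apply is_derive_Rplus; [apply Ha_der; lra|].
  rewrite Rmult_comm; apply (is_derive_comp g v); [apply Hg_der, Hv_pos|apply Hv_der]; lra.
Qed.

Lemma signed_dv_cont : cont_on (fun r => powr (Rabs (dv r)) (m - 2) * dv r) 0 R0.
Proof.
  apply (cont_on_comp 0 R0 (fun y => powr (Rabs y) (m - 2) * y)); [|exact Hdv_cont].
  intros r _; apply continuous_signed_powr, Hm.
Qed.

Lemma powr_abs_dv_cont (c : R) : 0 < c -> cont_on (fun r => powr (Rabs (dv r)) c) 0 R0.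
Proof.
  intros Hc; apply (cont_on_comp 0 R0 (fun y => powr (Rabs y) c)); [|exact Hdv_cont].
  intros r _; apply (continuous_comp Rabs (fun y => powr y c));
    [apply continuous_Rabs|apply continuous_powr, Hc].
Qed.

Lemma flux_cont : cont_on fl 0 R0.
Proof.
  unfold flux; apply cont_on_div; [apply cont_on_mult| |].
  - apply cont_on_powr; lra.
  - exact signed_dv_cont.
  - exact (powr_Dcoef_cont gamma).
  - intros r Hr; exact (powr_Dcoef_neq0 gamma r Hr).
Qed.

Lemma flux_at_right_0 : filterlim fl (at_right 0) (locally 0).
Proof.
  replace (locally 0) with (locally (fl 0)).
  - exact (cont_on_at_right 0 R0 fl HR0 flux_cont).
  - unfold flux; rewrite (powr_nonpos 0) by lra; f_equal; unfold Rdiv; ring.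
Qed.

Lemma flux_neg (r : R) : 0 < r < R0 -> fl r < 0.
Proof.
  apply (neg_of_derive_neg_at_right_0 fl _ R0 Hflux_der); [|exact flux_at_right_0].
  intros x Hx; pose proof (Hv_pos x ltac:(lra)); rewrite !powr_Rpower by lra.
  assert (0 < Rpower x (Nb - 1)) by apply exp_pos.
  assert (0 < Rpower (v x) p) by apply exp_pos; nra.
Qed.

Lemma dv_neg (r : R) : 0 < r < R0 -> dv r < 0.
Proof.
  intros Hr; pose proof (flux_neg r Hr) as Hfl; pose proof (Dcoef_ge r ltac:(lra)).
  destruct (Rlt_dec (dv r) 0) as [|Hn]; [assumption|exfalso].
  assert (0 <= fl r); [|lra].
  unfold flux; fold (Dcoef r); apply Rdiv_le_0_compat.
  - apply Rmult_le_pos; [apply powr_ge0|apply Rmult_le_pos; [apply powr_ge0|lra]].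
  - rewrite powr_Rpower by lra; apply exp_pos.
Qed.

Lemma flux_eq (r : R) : 0 < r < R0 ->
  fl r = - Rpower (- dv r) (m - 1) * Rpower r (Na - 1) / Rpower (Dcoef r) gamma.
Proof.
  intros Hr; pose proof (dv_neg r Hr); pose proof (Dcoef_ge r ltac:(lra)).
  unfold flux; fold (Dcoef r); rewrite Rabs_left by assumption.
  rewrite !powr_Rpower by lra; rewrite (Rpower_succ_exp (- dv r) (m - 1) (m - 2)) by (lra || ring).
  field; apply Rgt_not_eq, exp_pos.
Qed.

Lemma flux_bound : exists K, forall r, 0 < r < R0 -> Rabs (fl r) <= K * Rpower r Nb.
Proof.
  destruct (cont_on_bounded 0 R0 v ltac:(lra) Hv_cont) as [V HV].
  assert (HNb : 0 < Nb) by lra.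
  set (K := powr V p / Nb); exists K.
  assert (HG : forall r, 0 < r < R0 -> 0 <= fl r + K * Rpower r Nb).
  { apply (nonneg_of_derive_nonneg_at_right_0 _
      (fun x => - (powr x (Nb - 1) * powr (v x) p) + K * (Nb * Rpower x Nb / x)) R0).
    - intros r Hr; apply is_derive_Rplus; [apply Hflux_der, Hr|].
      apply is_derive_scal, is_derive_Rpower; lra.
    - intros r Hr; pose proof (Hv_pos r ltac:(lra)).
      replace (K * (Nb * Rpower r Nb / r)) with (powr V p * Rpower r (Nb - 1))
        by (unfold K; rewrite (Rpower_pred_exp r (Nb - 1) Nb) by (lra || ring); field; lra).
      assert (powr (v r) p <= powr V p).
      { apply powr_le; [|lra]; specialize (HV r ltac:(lra)).
        apply Rabs_le_between in HV; lra. }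
      rewrite (powr_Rpower r) by lra.
      assert (0 < Rpower r (Nb - 1)) by apply exp_pos; nra.
    - replace (locally 0) with (locally (0 + K * 0)) by (f_equal; ring).
      apply filterlim_Rplus; [exact flux_at_right_0|].
      apply filterlim_Rmult_l, filterlim_Rpower_at_right_0, HNb. }
  intros r Hr; specialize (HG r Hr); pose proof (flux_neg r Hr).
  rewrite Rabs_left by assumption; lra.
Qed.

Definition dv_power_from_flux (r : R) : R := - fl r * Rpower (Dcoef r) gamma / Rpower r (Na - 1).

Lemma dv_power_from_flux_eq (r : R) : 0 < r < R0 -> dv_power_from_flux r = Rpower (- dv r) (m - 1).
Proof.
  intros Hr; unfold dv_power_from_flux; rewrite (flux_eq r Hr).
  field; split; apply Rgt_not_eq, exp_pos.
Qed.

Lemma dv_from_flux (r : R) : 0 < r < R0 -> dv r = - Rpower (dv_power_from_flux r) (/ (m - 1)).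
Proof.
  intros Hr; pose proof (dv_neg r Hr).
  rewrite (dv_power_from_flux_eq r Hr), Rpower_mult, Rinv_r, Rpower_1 by lra; ring.
Qed.

(* v'' = - W' / ((m-1) (-v')^(m-2)) with W = (-v')^(m-1) = - flux D^gamma / r^(N+alpha-1),
   W' being expanded with the equation. *)
Definition ddv (r : R) : R :=
  - (- dv r / ((m - 1) * Rpower (- dv r) (m - 1))) *
    (Rpower r (Nb - 1) * Rpower (v r) p * Rpower (Dcoef r) gamma / Rpower r (Na - 1)
     + Rpower (- dv r) (m - 1) * gamma * (da r + dg (v r) * dv r) / Dcoef r
     - Rpower (- dv r) (m - 1) * (Na - 1) / r).

Lemma dv_derive (r : R) : 0 < r < R0 -> is_derive dv r (ddv r).
Proof.
  intros Hr; pose proof (dv_neg r Hr); pose proof (Dcoef_ge r ltac:(lra));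
    pose proof (Hv_pos r ltac:(lra)).
  eapply (is_derive_open_interval 0 R0 dv (fun x => - Rpower (dv_power_from_flux x) (/ (m - 1))));
    [exact Hr|intros x Hx; symmetry; apply dv_from_flux, Hx| |].
  - apply is_derive_Ropp, is_derive_Rpower_comp;
      [rewrite (dv_power_from_flux_eq r Hr); apply exp_pos|].
    apply (is_derive_div (fun x => - fl x * Rpower (Dcoef x) gamma) (fun x => Rpower x (Na - 1)));
      [| |apply Rgt_not_eq, exp_pos].
    + apply (is_derive_Rmult (fun x => - fl x) (fun x => Rpower (Dcoef x) gamma)).
      * apply is_derive_Ropp, Hflux_der, Hr.
      * apply is_derive_Rpower_comp; [lra|apply Dcoef_derive, Hr].
    + apply is_derive_Rpower; lra.
  - replace (Rpower (dv_power_from_flux r) (/ (m - 1))) with (- dv r)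
      by (rewrite (dv_from_flux r Hr); ring).
    rewrite (dv_power_from_flux_eq r Hr), (flux_eq r Hr), !powr_Rpower by lra; unfold ddv.
    assert (0 < Rpower (- dv r) (m - 1)) by apply exp_pos.
    assert (0 < Rpower r (Na - 1)) by apply exp_pos.
    assert (0 < Rpower (Dcoef r) gamma) by apply exp_pos.
    field; repeat split; lra.
Qed.

Definition f1 (r : R) : R :=
  powr r (Na - m + sigma) * powr (Rabs (dv r)) m / powr (Dcoef r) gamma.
Definition f2 (r : R) : R :=
  powr r (Na - m + 1 + sigma) * powr (Rabs (dv r)) m * da r / powr (Dcoef r) (gamma + 1).
Definition f3 (r : R) : R :=
  powr r (Na - m + 1 + sigma) * powr (Rabs (dv r)) m * dv r * dg (v r)
  / powr (Dcoef r) (gamma + 1).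
Definition f4 (r : R) : R :=
  powr r (Na + sigma - m - 1) * (powr (Rabs (dv r)) (m - 2) * dv r) * v r
  / powr (Dcoef r) gamma.

Definition pohozaev_const : R :=
  sigma - m + 2 - (Na - m + 1 + sigma) / m + (Nb + 1 + sigma - m) / (p + 1).

Definition pohozaev_integrand (r : R) : R :=
  pohozaev_const * f1 r + gamma / m * f2 r + gamma / m * f3 r
  + (Nb + 1 + sigma - m) / (p + 1) * (sigma - m + 1) * f4 r.

Definition pohozaev_grad (r : R) : R :=
  (m - 1) / m * (powr r (Na - m + 1 + sigma) * powr (Rabs (dv r)) m / powr (Dcoef r) gamma).
Definition pohozaev_pot (r : R) : R :=
  powr r (Nb + 1 + sigma - m) * powr (v r) (p + 1) / (p + 1).
Definition pohozaev_flux (r : R) : R :=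
  (Nb + 1 + sigma - m) / (p + 1) * (powr r (sigma - m + 1) * v r * fl r).

Definition pohozaev_fn (r : R) : R := pohozaev_grad r + pohozaev_pot r + pohozaev_flux r.

Lemma pohozaev_grad_derive (r : R) : 0 < r < R0 -> is_derive pohozaev_grad r
  ((m - 1) / m *
   ((Na - m + 1 + sigma) * Rpower r (Na - m + sigma) * Rpower (- dv r) m / Rpower (Dcoef r) gamma
    - m * Rpower r (Na - m + 1 + sigma) * Rpower (- dv r) (m - 1) * ddv r / Rpower (Dcoef r) gamma
    - gamma * Rpower r (Na - m + 1 + sigma) * Rpower (- dv r) m * (da r + dg (v r) * dv r)
      / Rpower (Dcoef r) (gamma + 1))).
Proof.
  intros Hr; pose proof (dv_neg r Hr); pose proof (Dcoef_ge r ltac:(lra)).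
  eapply (is_derive_open_interval 0 R0 _
    (fun x => (m - 1) / m *
      (Rpower x (Na - m + 1 + sigma) * Rpower (- dv x) m / Rpower (Dcoef x) gamma)));
    [exact Hr| | |].
  - intros x Hx; pose proof (dv_neg x Hx); pose proof (Dcoef_ge x ltac:(lra)).
    unfold pohozaev_grad; rewrite (Rabs_left (dv x)), !powr_Rpower by lra; reflexivity.
  - apply is_derive_scal.
    apply (is_derive_div (fun x => Rpower x (Na - m + 1 + sigma) * Rpower (- dv x) m)
      (fun x => Rpower (Dcoef x) gamma)); [|apply is_derive_Rpower_comp|apply Rgt_not_eq, exp_pos].
    + apply (is_derive_Rmult (fun x => Rpower x (Na - m + 1 + sigma)) (fun x => Rpower (- dv x) m)).
      * apply is_derive_Rpower; lra.
      * apply (is_derive_Rpower_comp (fun x => - dv x)); [lra|apply is_derive_Ropp, dv_derive, Hr].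
    + lra.
    + apply Dcoef_derive, Hr.
  - rewrite (Rpower_succ_exp (- dv r) m (m - 1)), (Rpower_succ_exp (Dcoef r) (gamma + 1) gamma),
      (Rpower_succ_exp r (Na - m + 1 + sigma) (Na - m + sigma)) by lra.
    assert (0 < Rpower (Dcoef r) gamma) by apply exp_pos.
    field; repeat split; lra.
Qed.

Lemma pohozaev_pot_derive (r : R) : 0 < r < R0 -> is_derive pohozaev_pot r
  ((Nb + 1 + sigma - m) / (p + 1) * Rpower r (Nb + sigma - m) * Rpower (v r) (p + 1)
   + Rpower r (Nb + 1 + sigma - m) * Rpower (v r) p * dv r).
Proof.
  intros Hr; pose proof (Hv_pos r ltac:(lra)).
  eapply (is_derive_open_interval 0 R0 _
    (fun x => Rpower x (Nb + 1 + sigma - m) * Rpower (v x) (p + 1) / (p + 1))); [exact Hr| | |].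
  - intros x Hx; pose proof (Hv_pos x ltac:(lra)).
    unfold pohozaev_pot; rewrite !powr_Rpower by lra; reflexivity.
  - apply (is_derive_div (fun x => Rpower x (Nb + 1 + sigma - m) * Rpower (v x) (p + 1))
      (fun _ => p + 1)); [|apply is_derive_Rconst|lra].
    apply (is_derive_Rmult (fun x => Rpower x (Nb + 1 + sigma - m))
      (fun x => Rpower (v x) (p + 1))).
    + apply is_derive_Rpower; lra.
    + apply is_derive_Rpower_comp; [lra|apply Hv_der, Hr].
  - rewrite (Rpower_succ_exp (v r) (p + 1) p),
      (Rpower_succ_exp r (Nb + 1 + sigma - m) (Nb + sigma - m)) by lra.
    field; lra.
Qed.

Lemma pohozaev_flux_derive (r : R) : 0 < r < R0 -> is_derive pohozaev_flux r
  ((Nb + 1 + sigma - m) / (p + 1) *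
   (((sigma - m + 1) * Rpower r (sigma - m) * v r + Rpower r (sigma - m + 1) * dv r) * fl r
    - Rpower r (sigma - m + 1) * v r * (Rpower r (Nb - 1) * Rpower (v r) p))).
Proof.
  intros Hr; pose proof (Hv_pos r ltac:(lra)).
  eapply (is_derive_open_interval 0 R0 _
    (fun x => (Nb + 1 + sigma - m) / (p + 1) * (Rpower x (sigma - m + 1) * v x * fl x)));
    [exact Hr| | |].
  - intros x Hx; unfold pohozaev_flux; rewrite powr_Rpower by lra; reflexivity.
  - apply is_derive_scal.
    apply (is_derive_Rmult (fun x => Rpower x (sigma - m + 1) * v x) fl);
      [apply (is_derive_Rmult (fun x => Rpower x (sigma - m + 1)) v)|apply Hflux_der, Hr].
    + apply is_derive_Rpower; lra.
    + apply Hv_der, Hr.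
  - rewrite (Rpower_succ_exp r (sigma - m + 1) (sigma - m)), !powr_Rpower by lra.
    field; lra.
Qed.

Lemma pohozaev_derive (r : R) : 0 < r < R0 -> is_derive pohozaev_fn r (pohozaev_integrand r).
Proof.
  intros Hr; pose proof (dv_neg r Hr); pose proof (Dcoef_ge r ltac:(lra));
    pose proof (Hv_pos r ltac:(lra)).
  eapply (is_derive_open_interval 0 R0 _
    (fun x => pohozaev_grad x + pohozaev_pot x + pohozaev_flux x));
    [exact Hr|reflexivity| |].
  { apply is_derive_Rplus; [apply is_derive_Rplus|].
    - apply pohozaev_grad_derive, Hr.
    - apply pohozaev_pot_derive, Hr.
    - apply pohozaev_flux_derive, Hr. }
  unfold pohozaev_integrand, pohozaev_const, f1, f2, f3, f4, ddv.
  rewrite (Rabs_left (dv r)), !powr_Rpower, (flux_eq r Hr) by lra.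
  rewrite (Rpower_succ_exp (- dv r) m (m - 1)) by lra.
  rewrite (Rpower_pred_exp (- dv r) (m - 2) (m - 1)) by lra.
  rewrite (Rpower_succ_exp (v r) (p + 1) p) by lra.
  rewrite (Rpower_succ_exp (Dcoef r) (gamma + 1) gamma) by lra.
  rewrite (Rpower_succ_exp r (Na - m + 1 + sigma) (Na - m + sigma)) by lra.
  rewrite (Rpower_pred_exp r (Na + sigma - m - 1) (Na - m + sigma)) by lra.
  rewrite (Rpower_add_exp r (Na - m + sigma) (sigma - m + 1) (Na - 1)) by lra.
  rewrite (Rpower_succ_exp r (Nb + 1 + sigma - m) (Nb + sigma - m)) by lra.
  rewrite (Rpower_add_exp r (Nb + sigma - m) (sigma - m + 1) (Nb - 1)) by lra.
  rewrite (Rpower_pred_exp r (sigma - m) (sigma - m + 1)) by lra.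
  assert (0 < Rpower (- dv r) (m - 1)) by apply exp_pos.
  assert (0 < Rpower r (Na - 1)) by apply exp_pos.
  assert (0 < Rpower r (sigma - m + 1)) by apply exp_pos.
  assert (0 < Rpower (Dcoef r) gamma) by apply exp_pos.
  field; repeat split; lra.
Qed.

Lemma f1_cont : cont_on f1 0 R0.
Proof.
  unfold f1; apply cont_on_div; [apply cont_on_mult| |].
  - apply cont_on_powr; lra.
  - apply powr_abs_dv_cont; lra.
  - apply powr_Dcoef_cont.
  - intros r Hr; apply powr_Dcoef_neq0, Hr.
Qed.

Lemma f2_cont : cont_on f2 0 R0.
Proof.
  unfold f2; apply cont_on_div; [apply cont_on_mult; [apply cont_on_mult|]| |].
  - apply cont_on_powr; lra.
  - apply powr_abs_dv_cont; lra.
  - apply (cont_on_comp_nonneg 0 R0 da (fun r => r)); [exact Hda_cont|apply cont_on_id|].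
    intros r Hr; apply Hr.
  - apply powr_Dcoef_cont.
  - intros r Hr; apply powr_Dcoef_neq0, Hr.
Qed.

Lemma f3_cont : cont_on f3 0 R0.
Proof.
  unfold f3; apply cont_on_div;
    [apply cont_on_mult; [apply cont_on_mult; [apply cont_on_mult|]|]| |].
  - apply cont_on_powr; lra.
  - apply powr_abs_dv_cont; lra.
  - exact Hdv_cont.
  - apply cont_on_comp_nonneg; [exact Hdg_cont|exact Hv_cont|exact v_ge0].
  - apply powr_Dcoef_cont.
  - intros r Hr; apply powr_Dcoef_neq0, Hr.
Qed.

Lemma f4_cont (e : R) : 0 < e -> cont_on f4 e R0.
Proof.
  intros He; unfold f4; apply cont_on_div; [apply cont_on_mult; [apply cont_on_mult|]| |].
  - apply cont_on_powr_pos, He.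
  - apply (cont_on_sub _ 0 R0); [lra|lra|exact signed_dv_cont].
  - apply (cont_on_sub _ 0 R0); [lra|lra|exact Hv_cont].
  - apply (cont_on_sub _ 0 R0); [lra|lra|apply powr_Dcoef_cont].
  - intros r Hr; apply powr_Dcoef_neq0; lra.
Qed.

Lemma pohozaev_integrand_cont (e : R) : 0 < e -> cont_on pohozaev_integrand e R0.
Proof.
  intros He; assert (Hsub : forall f, cont_on f 0 R0 -> cont_on f e R0)
    by (intros f; apply cont_on_sub; lra).
  unfold pohozaev_integrand; repeat apply cont_on_plus; apply cont_on_mult;
    try apply cont_on_const.
  - exact (Hsub f1 f1_cont).
  - exact (Hsub f2 f2_cont).
  - exact (Hsub f3 f3_cont).
  - exact (f4_cont e He).
Qed.

Lemma pohozaev_grad_cont : cont_on pohozaev_grad 0 R0.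
Proof.
  unfold pohozaev_grad; apply cont_on_mult; [apply cont_on_const|].
  apply cont_on_div; [apply cont_on_mult| |].
  - apply cont_on_powr; lra.
  - apply powr_abs_dv_cont; lra.
  - apply powr_Dcoef_cont.
  - intros r Hr; apply powr_Dcoef_neq0, Hr.
Qed.

Lemma pohozaev_pot_cont : cont_on pohozaev_pot 0 R0.
Proof.
  unfold pohozaev_pot; apply cont_on_div; [apply cont_on_mult|apply cont_on_const|intros; lra].
  - apply cont_on_powr; lra.
  - apply (cont_on_comp 0 R0 (fun y => powr y (p + 1))); [|exact Hv_cont].
    intros r _; apply continuous_powr; lra.
Qed.

Lemma pohozaev_fn_cont (e : R) : 0 < e -> cont_on pohozaev_fn e R0.
Proof.
  intros He; assert (Hsub : forall f, cont_on f 0 R0 -> cont_on f e R0)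
    by (intros f; apply cont_on_sub; lra).
  unfold pohozaev_fn; repeat apply cont_on_plus.
  - exact (Hsub _ pohozaev_grad_cont).
  - exact (Hsub _ pohozaev_pot_cont).
  - unfold pohozaev_flux; apply cont_on_mult; [apply cont_on_const|].
    apply cont_on_mult; [apply cont_on_mult|].
    + apply cont_on_powr_pos, He.
    + exact (Hsub v Hv_cont).
    + exact (Hsub _ flux_cont).
Qed.

Lemma f4_eq (r : R) : 0 < r < R0 -> f4 r = Rpower r (sigma - m) * v r * fl r.
Proof.
  intros Hr; unfold f4, flux; fold (Dcoef r); rewrite !(powr_Rpower r) by lra.
  rewrite (Rpower_add_exp r (Na + sigma - m - 1) (sigma - m) (Na - 1)) by lra.
  unfold Rdiv; ring.
Qed.

Lemma weighted_flux_bound : exists C, forall c r, 0 < r < R0 ->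
  Rabs (Rpower r c * v r * fl r) <= C * Rpower r (c + Nb).
Proof.
  destruct (cont_on_bounded 0 R0 v ltac:(lra) Hv_cont) as [V HV].
  destruct flux_bound as [K HK].
  exists (V * K); intros c r Hr; rewrite !Rabs_mult, Rabs_pos_eq by (left; apply exp_pos).
  rewrite (Rpower_add_exp r (c + Nb) c Nb) by lra.
  specialize (HV r ltac:(lra)); specialize (HK r Hr).
  pose proof (Rabs_pos (v r)); pose proof (Rabs_pos (fl r)).
  replace (V * K * (Rpower r c * Rpower r Nb)) with (Rpower r c * (V * (K * Rpower r Nb))) by ring.
  rewrite Rmult_assoc; apply Rmult_le_compat_l; [left; apply exp_pos|].
  apply Rmult_le_compat; lra.
Qed.

Lemma f4_bound : exists C, forall r, 0 < r < R0 -> Rabs (f4 r) <= C * Rpower r (Nb + sigma - m).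
Proof.
  destruct weighted_flux_bound as [C HC]; exists C; intros r Hr.
  rewrite (f4_eq r Hr); replace (Nb + sigma - m) with (sigma - m + Nb) by ring; apply HC, Hr.
Qed.

Lemma pohozaev_flux_at_right_0 : filterlim pohozaev_flux (at_right 0) (locally 0).
Proof.
  destruct weighted_flux_bound as [C HC].
  set (k := (Nb + 1 + sigma - m) / (p + 1)).
  apply (filterlim_of_abs_sub_le _ (fun r => Rabs k * C * Rpower r (sigma - m + 1 + Nb))).
  - exists (mkposreal R0 HR0); intros r Hr Hr0.
    change (Rabs (r - 0) < R0) in Hr; rewrite Rminus_0_r in Hr; apply Rabs_def2 in Hr.
    unfold pohozaev_flux; fold k; rewrite Rminus_0_r, Rabs_mult, (powr_Rpower r) by lra.
    rewrite (Rmult_assoc (Rabs k) C); apply Rmult_le_compat_l; [apply Rabs_pos|apply HC; lra].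
  - replace (locally 0) with (locally (Rabs k * C * 0)) by (f_equal; ring).
    apply filterlim_Rmult_l, filterlim_Rpower_at_right_0; lra.
Qed.

Lemma pohozaev_fn_at_right_0 : filterlim pohozaev_fn (at_right 0) (locally 0).
Proof.
  replace (locally 0) with (locally (pohozaev_grad 0 + pohozaev_pot 0 + 0)).
  - apply filterlim_Rplus; [apply filterlim_Rplus|exact pohozaev_flux_at_right_0].
    + exact (cont_on_at_right 0 R0 _ HR0 pohozaev_grad_cont).
    + exact (cont_on_at_right 0 R0 _ HR0 pohozaev_pot_cont).
  - unfold pohozaev_grad, pohozaev_pot; rewrite !(powr_nonpos 0) by lra.
    f_equal; unfold Rdiv; ring.
Qed.

Lemma pohozaev_fn_R0 : pohozaev_fn R0 =
  (m - 1) / m * (powr R0 (Na - m + 1 + sigma) * powr (Rabs (dv R0)) m / powr (a R0 + g 0) gamma).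
Proof.
  unfold pohozaev_fn, pohozaev_grad, pohozaev_pot, pohozaev_flux, Dcoef.
  rewrite Hv_R0, (powr_nonpos 0) by lra; unfold Rdiv; ring.
Qed.

Lemma pohozaev_identity_truncated (e : R) : 0 < e < R0 ->
  pohozaev_const * RInt f1 e R0 + gamma / m * RInt f2 e R0 + gamma / m * RInt f3 e R0
  + (Nb + 1 + sigma - m) / (p + 1) * (sigma - m + 1) * RInt f4 e R0
  = pohozaev_fn R0 - pohozaev_fn e.
Proof.
  intros He; assert (Hsub : forall f, cont_on f 0 R0 -> ex_RInt f e R0)
    by (intros f Hf; apply cont_on_ex_RInt; [lra|apply (cont_on_sub f 0 R0); [lra|lra|exact Hf]]).
  rewrite <- RInt_lincomb4; [|apply Hsub, f1_cont|apply Hsub, f2_cont|apply Hsub, f3_cont|].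
  - apply (RInt_eq_of_derive_at_left pohozaev_fn pohozaev_integrand (e / 2) R0); [lra| | | |lra].
    + intros x Hx; apply pohozaev_derive; lra.
    + apply pohozaev_integrand_cont; lra.
    + apply (cont_on_at_left (e / 2)); [lra|apply pohozaev_fn_cont; lra].
  - apply cont_on_ex_RInt; [lra|apply f4_cont; lra].
Qed.

Theorem pohozaev_identity : exists I1 I2 I3 I4 : R,
  int0 f1 R0 I1 /\ int0 f2 R0 I2 /\ int0 f3 R0 I3 /\ int0 f4 R0 I4 /\
  pohozaev_const * I1
  = (m - 1) / m * (powr R0 (Na - m + 1 + sigma) * powr (Rabs (dv R0)) m / powr (a R0 + g 0) gamma)
    - gamma / m * I2 - gamma / m * I3 - (Nb + 1 + sigma - m) / (p + 1) * (sigma - m + 1) * I4.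
Proof.
  destruct f4_bound as [C HC].
  destruct (int0_of_Rpower_bound f4 R0 C (Nb + sigma - m) HR0 ltac:(lra)) as [I4 HI4]; [|exact HC|].
  { intros e He; apply cont_on_ex_RInt; [lra|apply f4_cont; lra]. }
  pose proof (int0_RInt f1 R0 HR0 f1_cont) as HI1.
  pose proof (int0_RInt f2 R0 HR0 f2_cont) as HI2.
  pose proof (int0_RInt f3 R0 HR0 f3_cont) as HI3.
  exists (RInt f1 0 R0), (RInt f2 0 R0), (RInt f3 0 R0), I4; do 4 (split; [assumption|]).
  rewrite <- pohozaev_fn_R0.
  set (k4 := (Nb + 1 + sigma - m) / (p + 1) * (sigma - m + 1)).
  set (S := fun e => pohozaev_const * RInt f1 e R0 + gamma / m * RInt f2 e R0
                     + gamma / m * RInt f3 e R0 + k4 * RInt f4 e R0).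
  assert (Hlim : filterlim S (at_right 0) (locally (pohozaev_const * RInt f1 0 R0
      + gamma / m * RInt f2 0 R0 + gamma / m * RInt f3 0 R0 + k4 * I4))).
  { repeat apply filterlim_Rplus; apply filterlim_Rmult_l.
    - exact (proj2 HI1).
    - exact (proj2 HI2).
    - exact (proj2 HI3).
    - exact (proj2 HI4). }
  assert (Hlim' : filterlim S (at_right 0) (locally (pohozaev_fn R0 + - 0))).
  { apply (filterlim_ext_loc (fun e => pohozaev_fn R0 + - pohozaev_fn e)).
    - exists (mkposreal R0 HR0); intros e He He0.
      change (Rabs (e - 0) < R0) in He; rewrite Rminus_0_r in He; apply Rabs_def2 in He.
      symmetry; apply pohozaev_identity_truncated; lra.
    - apply filterlim_Rplus, filterlim_Ropp, pohozaev_fn_at_right_0; apply filterlim_const. }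
  pose proof (filterlim_locally_unique _ _ _ Hlim Hlim'); unfold k4 in *; lra.
Qed.

End RadialSolution.

Theorem proposition8p1
  (N : nat) (R0 m p gamma alpha beta c1 c2 sigma : R)
  (a da g dg v dv : R -> R)
  (HN : (1 <= N)%nat) (HR : 0 < R0) (Hm : 1 < m) (HNm : m < INR N) (Hp : 1 < p)
  (Hgamma : 0 < gamma < m - 1)
  (Hal : 0 < INR N + alpha - m) (Hbe : 0 < beta - alpha + 1)
  (* a : [0,oo) -> (0,oo), C^1, c1 <= a <= c2 *)
  (Hc : 0 < c1 <= c2)
  (Ha_bd : forall r, 0 <= r -> c1 <= a r <= c2)
  (Ha_der : forall r, 0 < r -> is_derive a r (da r))
  (Ha_cont : cont_nonneg a) (Hda_cont : cont_nonneg da)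
  (* g : [0,oo) -> [0,oo), C^1, nondecreasing *)
  (Hg_nn : forall s, 0 <= s -> 0 <= g s)
  (Hg_der : forall s, 0 < s -> is_derive g s (dg s))
  (Hg_cont : cont_nonneg g) (Hdg_cont : cont_nonneg dg)
  (Hg_mono : forall s t, 0 <= s <= t -> g s <= g t)
  (Hsol : pos_radial_solution N alpha beta m gamma p a g R0 v dv)
  (Hsigma : - (INR N + alpha - m) < sigma <= m - 1) :
  let D := fun r => a r + g (v r) in
  exists I1 I2 I3 I4 : R,
    int0 (fun r => powr r (INR N + alpha - m + sigma) * powr (Rabs (dv r)) m
                   / powr (D r) gamma) R0 I1 /\
    int0 (fun r => powr r (INR N + alpha - m + 1 + sigma) * powr (Rabs (dv r)) m
                   * da r / powr (D r) (gamma + 1)) R0 I2 /\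
    int0 (fun r => powr r (INR N + alpha - m + 1 + sigma) * powr (Rabs (dv r)) m
                   * dv r * dg (v r) / powr (D r) (gamma + 1)) R0 I3 /\
    int0 (fun r => powr r (INR N + alpha + sigma - m - 1)
                   * (powr (Rabs (dv r)) (m - 2) * dv r) * v r
                   / powr (D r) gamma) R0 I4 /\
    (sigma - m + 2 - (INR N + alpha - m + 1 + sigma) / m
       + (INR N + beta + 1 + sigma - m) / (p + 1)) * I1
    = (m - 1) / m * (powr R0 (INR N + alpha - m + 1 + sigma) * powr (Rabs (dv R0)) m
                      / powr (a R0 + g 0) gamma)
      - gamma / m * I2
      - gamma / m * I3
      - (INR N + beta + 1 + sigma - m) / (p + 1) * (sigma - m + 1) * I4.
Proof.
  intros D; destruct Hsol as (Hv_pos & Hv_cont & Hv_der & Hdv_cont & Hflux_der & _ & Hv_R0).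
  apply (pohozaev_identity N R0 m p gamma alpha beta c1 sigma a da g dg v dv);
    try assumption; try lra; intros r Hr; apply Ha_bd, Hr.
Qed.
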